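(* Let $Z$ be the pure $3$-dimensional simplicial complex on the $16$ vertices $0,1,\dots,9,a,b,c,d,e,f$ whose $80$ facets are the following four-element sets (each string lists the four vertices of a facet): 048c, 048e, 049c, 049d, 04ad, 04ae, 059d, 059f, 05ad, 05ae, 05be, 05bf, 068c, 068e, 069c, 069e, 079e, 079f, 07be, 07bf, 148c, 148e, 14ae, 14af, 14bc, 14bf, 158c, 158d, 159d, 159f, 15bc, 15bf, 168e, 168f, 16ae, 16af, 178d, 178f, 179d, 179f, 24ad, 24af, 24bd, 24bf, 258c, 258d, 25ac, 25ad, 268c, 268d, 269c, 269e, 26ae, 26af, 26bd, 26bf, 279c, 279e, 27ac, 27ae, 349c, 349d, 34bc, 34bd, 35ac, 35ae, 35bc, 35be, 368d, 368f, 36bd, 36bf, 378d, 378f, 379c, 379d, 37ac, 37ae, 37be, 37bf. Then $Z$ is not polytopal: there is no simplicial convex $4$-polytope whose boundary complex is combinatorially isomorphic to $Z$.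
   Context: $Z$ is Zheng's balanced $2$-neighborly combinatorial $3$-sphere with $f$-vector $(16,96,160,80)$, whose $1$-skeleton is the complete multipartite graph $K_{4,4,4,4}$. A simplicial $(d-1)$-sphere is polytopal if it is isomorphic to the boundary complex of a simplicial convex $d$-polytope; here $d=4$. *)

From mathcomp Require Import all_boot all_order all_algebra.
From mathcomp Require Import reals.
Set Implicit Arguments. Unset Strict Implicit. Unset Printing Implicit Defensive.
Import Order.TTheory GRing.Theory Num.Theory.
Local Open Scope ring_scope.

Definition dotp (R : realType) (d : nat) (x y : 'rV[R]_d) : R :=
  \sum_(k < d) x 0 k * y 0 k.

(* I.e. T is the vertex set of a nonempty
   proper face of conv{p i} (when all p i are vertices). *)
Definition supp_face (R : realType) (n d : nat) (p : 'I_n -> 'rV[R]_d)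
    (T : {set 'I_n}) : Prop :=
  exists a : 'rV[R]_d, exists b : R,
    [/\ a != 0,
        (forall i, i \in T -> dotp (p i) a = b) &
        (forall i, i \notin T -> dotp (p i) a < b)].

(* Homogenized coordinates of the points indexed by T (rows (p i, 1) for
   i in T, zero rows otherwise); its rank is 1 + the affine dimension of
   the point set {p i | i in T}. *)
Definition hom_mx (R : realType) (n d : nat) (p : 'I_n -> 'rV[R]_d)
    (T : {set 'I_n}) : 'M[R]_(n, d + 1) :=
  \matrix_(i < n, j < d + 1)
     (if i \in T then (row_mx (p i) (const_mx 1 : 'rV[R]_1)) 0 j else 0).

Definition is_facet (R : realType) (n d : nat) (p : 'I_n -> 'rV[R]_d)
    (T : {set 'I_n}) : Prop :=
  and (supp_face p T) (\rank (hom_mx p T) = d).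

(* p realizes the pure complex with facet family K as the boundary complex
   of the convex polytope conv{p i | i < n} in R^d: every p i is a vertex
   (so the vertices of the polytope are exactly the p i, pairwise distinct),
   and the vertex sets of the facets of the polytope are exactly the
   members of K.  (Faces of a polytope are determined by its facets.) *)
Definition boundary_realization (R : realType) (n d : nat)
    (K : {set 'I_n} -> Prop) (p : 'I_n -> 'rV[R]_d) : Prop :=
  (forall i, supp_face p [set i]) /\
  (forall T : {set 'I_n}, is_facet p T <-> K T).

(* K is polytopal in dimension d: it is isomorphic to the boundary complex of
   a convex d-polytope.  The vertex labelling p absorbs the isomorphism. *)
Definition polytopal (R : realType) (n d : nat) (K : {set 'I_n} -> Prop) : Prop :=
  exists p : 'I_n -> 'rV[R]_d, boundary_realization K p.

Definition Z_facets : seq (seq nat) := (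
  [:: [:: 0; 4; 8; 12];
  [:: 0; 4; 8; 14];
  [:: 0; 4; 9; 12];
  [:: 0; 4; 9; 13];
  [:: 0; 4; 10; 13];
  [:: 0; 4; 10; 14];
  [:: 0; 5; 9; 13];
  [:: 0; 5; 9; 15];
  [:: 0; 5; 10; 13];
  [:: 0; 5; 10; 14];
  [:: 0; 5; 11; 14];
  [:: 0; 5; 11; 15];
  [:: 0; 6; 8; 12];
  [:: 0; 6; 8; 14];
  [:: 0; 6; 9; 12];
  [:: 0; 6; 9; 14];
  [:: 0; 7; 9; 14];
  [:: 0; 7; 9; 15];
  [:: 0; 7; 11; 14];
  [:: 0; 7; 11; 15];
  [:: 1; 4; 8; 12];
  [:: 1; 4; 8; 14];
  [:: 1; 4; 10; 14];
  [:: 1; 4; 10; 15];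
  [:: 1; 4; 11; 12];
  [:: 1; 4; 11; 15];
  [:: 1; 5; 8; 12];
  [:: 1; 5; 8; 13];
  [:: 1; 5; 9; 13];
  [:: 1; 5; 9; 15];
  [:: 1; 5; 11; 12];
  [:: 1; 5; 11; 15];
  [:: 1; 6; 8; 14];
  [:: 1; 6; 8; 15];
  [:: 1; 6; 10; 14];
  [:: 1; 6; 10; 15];
  [:: 1; 7; 8; 13];
  [:: 1; 7; 8; 15];
  [:: 1; 7; 9; 13];
  [:: 1; 7; 9; 15];
  [:: 2; 4; 10; 13];
  [:: 2; 4; 10; 15];
  [:: 2; 4; 11; 13];
  [:: 2; 4; 11; 15];
  [:: 2; 5; 8; 12];
  [:: 2; 5; 8; 13];
  [:: 2; 5; 10; 12];
  [:: 2; 5; 10; 13];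
  [:: 2; 6; 8; 12];
  [:: 2; 6; 8; 13];
  [:: 2; 6; 9; 12];
  [:: 2; 6; 9; 14];
  [:: 2; 6; 10; 14];
  [:: 2; 6; 10; 15];
  [:: 2; 6; 11; 13];
  [:: 2; 6; 11; 15];
  [:: 2; 7; 9; 12];
  [:: 2; 7; 9; 14];
  [:: 2; 7; 10; 12];
  [:: 2; 7; 10; 14];
  [:: 3; 4; 9; 12];
  [:: 3; 4; 9; 13];
  [:: 3; 4; 11; 12];
  [:: 3; 4; 11; 13];
  [:: 3; 5; 10; 12];
  [:: 3; 5; 10; 14];
  [:: 3; 5; 11; 12];
  [:: 3; 5; 11; 14];
  [:: 3; 6; 8; 13];
  [:: 3; 6; 8; 15];
  [:: 3; 6; 11; 13];
  [:: 3; 6; 11; 15];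
  [:: 3; 7; 8; 13];
  [:: 3; 7; 8; 15];
  [:: 3; 7; 9; 12];
  [:: 3; 7; 9; 13];
  [:: 3; 7; 10; 12];
  [:: 3; 7; 10; 14];
  [:: 3; 7; 11; 14];
  [:: 3; 7; 11; 15]])%N.

Definition Z_facet (T : {set 'I_16}) : Prop :=
  exists2 s, s \in Z_facets & T = [set x : 'I_16 | nat_of_ord x \in s].

(* If Z were the boundary of a simplicial 4-polytope with vertices p_0, ..., p_15,
   the brackets [i0 i1 i2 i3 i4] := det of the rows (p_i, 1) would be alternating,
   would satisfy the three-term Grassmann-Pluecker relations, and for every facet F
   and vertices v, w off F, [F v] and [F w] would have the same nonzero sign: by
   Cramer's rule [F w] l(v) = [F v] l(w), where l < 0 off the facet hyperplane.
   From the (unknown) sign of [2 6 7 10 14] these rules force the signs of a few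
   hundred brackets, until one is forced both ways; the derivation is recorded in
   [Z_certificate] and replayed by computation. *)

From mathcomp Require Import all_boot all_order all_algebra.
From mathcomp Require Import perm reals ring lra zify.
Set Implicit Arguments. Unset Strict Implicit. Unset Printing Implicit Defensive.
Import Order.TTheory GRing.Theory Num.Theory.
Local Open Scope ring_scope.

Section Brackets.
Variables (R : comPzRingType) (m : nat) (x : nat -> 'rV[R]_m).

Definition seqmx k (s : seq nat) : 'M[R]_(k, m) := \matrix_(i < k) x (nth 0 s i).

(* The junk value 0 on sequences of the wrong length makes the alternation and
   Grassmann-Pluecker identities below hold unconditionally. *)
Definition bracket (s : seq nat) : R :=
  if size s == m then \det (seqmx m s) else 0.

Lemma bracket_swap pre a b s :
  bracket (pre ++ a :: b :: s) = - bracket (pre ++ b :: a :: s).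
Proof.
rewrite /bracket !size_cat /=; case: eqP => [sz | _]; last by rewrite oppr0.
have lt1 : (size pre < m)%N by lia.
have lt2 : ((size pre).+1 < m)%N by lia.
pose i1 := Ordinal lt1; pose i2 := Ordinal lt2.
have -> : seqmx m (pre ++ a :: b :: s) = xrow i1 i2 (seqmx m (pre ++ b :: a :: s)).
  apply/matrixP => i j; rewrite !mxE; congr (x _ 0 j).
  rewrite !nth_cat; case: tpermP => [-> | -> | ne1 ne2] /=.
  - by rewrite ltnn ltnNge leqnSn subnn subSnn.
  - by rewrite ltnn ltnNge leqnSn subnn subSnn.
  case: ltnP => // le.
  have ne1' : (i : nat) <> size pre by move=> e; apply: ne1; apply: val_inj.
  have ne2' : (i : nat) <> (size pre).+1 by move=> e; apply: ne2; apply: val_inj.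
  by case e: (i - size pre)%N => [|[|k]] //; lia.
rewrite xrowE det_mulmx det_perm odd_tperm.
by rewrite (_ : i1 != i2) ?expr1 ?mulN1r // -val_eqE /= neq_ltn ltnSn.
Qed.

(* Expansion along the last column of [Y | column j of Y], whose determinant
   vanishes, then linearity in j. *)
Lemma cramer_row' (Y : 'M[R]_(m.+1, m)) (c : 'cV[R]_m) :
  \sum_(k < m.+1) (-1) ^+ k * \det (row' k Y) * (row k Y *m c) 0 0 = 0.
Proof.
have col_cramer j : \sum_(k < m.+1) (-1) ^+ k * \det (row' k Y) * Y k j = 0.
  pose N := \matrix_(r, l < m.+1)
    if unlift ord_max l is Some l' then Y r l' else Y r j.
  have N0 : \det N = 0.
    rewrite -det_tr (@determinant_alternate _ _ _ (lift ord_max j) ord_max) //.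
      by rewrite eq_sym neq_lift.
    by move=> r; rewrite !mxE liftK unlift_none.
  have col'N : col' ord_max N = Y by apply/matrixP => a b; rewrite !mxE liftK.
  transitivity ((-1) ^+ m * \det N); last by rewrite N0 mulr0.
  rewrite (expand_det_col _ ord_max) big_distrr; apply: eq_bigr => k _.
  rewrite /cofactor col'N !mxE unlift_none exprD -[LHS](signrMK m).
  by congr (_ * _); ring.
transitivity (\sum_(j < m) (\sum_(k < m.+1) (-1) ^+ k * \det (row' k Y) * Y k j) * c j 0).
  under [RHS]eq_bigr => j _ do rewrite big_distrl.
  rewrite [RHS]exchange_big; apply: eq_bigr => k _; rewrite mxE big_distrr.
  by apply: eq_bigr => j _; rewrite !mxE; exact: mulrA.
by rewrite big1 // => j _; rewrite col_cramer mul0r.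
Qed.

Lemma row'_seqmx s (k : 'I_m.+1) : size s = m.+1 ->
  row' k (seqmx m.+1 s) = seqmx m (take k s ++ drop k.+1 s).
Proof.
move=> sz; apply/matrixP => i j; rewrite !mxE nth_cat size_take sz ltn_ord.
rewrite [nat_of_ord (lift _ _)]/= /bump; case: ltnP => [ik | ki].
  by rewrite nth_take // leqNgt ik.
by rewrite nth_drop addSn subnKC.
Qed.

Lemma bracket_cramer (u t : seq nat) (c : 'cV[R]_m) :
  (size u + size t)%N = m.+1 -> {in u, forall y, (x y *m c) 0 0 = 0} ->
  \sum_(k < size t)
     (-1) ^+ k * bracket (u ++ take k t ++ drop k.+1 t) * (x (nth 0 t k) *m c) 0 0 = 0.
Proof.
move=> sz cu; set s := u ++ t.
pose F k := (-1) ^+ k * bracket (take k s ++ drop k.+1 s) * (x (nth 0 s k) *m c) 0 0.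
have F0 : \sum_(k < m.+1) F k = 0.
  rewrite -[RHS](cramer_row' (seqmx m.+1 s) c); apply: eq_bigr => k _.
  have sz_s : size s = m.+1 by rewrite size_cat.
  rewrite /F /bracket row'_seqmx // rowK size_cat size_take size_drop sz_s ltn_ord.
  by rewrite subSS subnKC ?eqxx // -ltnS.
rewrite -(big_mkord xpredT F) -sz (big_cat_nat _ (leq_addr _ _)) //= in F0.
rewrite big_nat big1 ?add0r in F0; last first.
  by move=> k /andP[_ ku]; rewrite /F nth_cat ku cu ?mulr0 // mem_nth.
rewrite -{1}(add0n (size u)) big_addn addKn big_mkord in F0.
transitivity ((-1) ^+ size u * \sum_(k < size t) F (k + size u)%N).
  rewrite big_distrr; apply: eq_bigr => k _; rewrite -[LHS](signrMK (size u)).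
  congr (_ * _); rewrite /F !(take_cat, drop_cat, nth_cat).
  rewrite !ltnNge !leq_addl /= !addnK leqW ?leq_addl //= -addSn addnK -catA exprD; ring.
by rewrite F0 mulr0.
Qed.

Lemma bracket_notuniq s : ~~ uniq s -> bracket s = 0.
Proof.
rewrite /bracket; case: eqP => // sz /(uniqPn 0)[i [j [ij js eq_ij]]].
have jm : (j < m)%N by rewrite -sz.
apply: (@determinant_alternate _ _ _ (Ordinal (ltn_trans ij jm)) (Ordinal jm)).
  by rewrite -val_eqE /= ltn_eqF.
by move=> k; rewrite !mxE eq_ij.
Qed.

Lemma bracket_linear s : (size s).+1 = m ->
  exists L : 'cV[R]_m, forall k, bracket (rcons s k) = (x k *m L) 0 0.
Proof.
move=> sz; have lt : (size s < m)%N by rewrite -sz.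
pose i0 := Ordinal lt.
exists (\col_j cofactor (seqmx m (rcons s 0)) i0 j) => k.
rewrite /bracket size_rcons sz eqxx (expand_det_row _ i0) mxE.
apply: eq_bigr => j _; rewrite !mxE nth_rcons ltnn eqxx; congr (_ * _).
rewrite /cofactor; congr (_ * \det _); apply/matrixP => a b; rewrite !mxE !nth_rcons.
have a_lt : (a < size s)%N by case: a => /= a; rewrite -sz.
by rewrite [nat_of_ord (lift _ _)]/= /bump [(size s <= _)%N]leqNgt a_lt add0n a_lt.
Qed.

Lemma bracket_grassmann_plucker u a b c d :
  bracket (u ++ [:: a; b]) * bracket (u ++ [:: c; d])
  - bracket (u ++ [:: a; c]) * bracket (u ++ [:: b; d])
  + bracket (u ++ [:: a; d]) * bracket (u ++ [:: b; c]) = 0.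
Proof.
have [sz | nsz] := eqVneq (size u).+2 m; last first.
  by rewrite /bracket !size_cat /= addn2 (negbTE nsz) !mul0r subrr addr0.
have [|L bracketL] := @bracket_linear (rcons u a); first by rewrite size_rcons.
have Lu : {in u, forall y, (x y *m L) 0 0 = 0}.
  by move=> y yu; rewrite -bracketL bracket_notuniq // rcons_uniq mem_rcons in_cons yu orbT.
have := @bracket_cramer u [:: b; c; d] L _ Lu; rewrite addn3 sz => /(_ erefl).
rewrite !big_ord_recl big_ord0 /= -!bracketL -!cats1 -!catA /= => cramer.
by rewrite -[RHS]cramer; ring.
Qed.

End Brackets.

Lemma det_neq0_kernel_row (K : fieldType) m k (A : 'M[K]_(k, m)) (M : 'M[K]_m)
    (L : 'cV[K]_m) (i : 'I_m) :
  (A <= M)%MS -> \rank A = m.-1 -> A *m L = 0 -> (row i M *m L) 0 0 != 0 ->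
  \det M != 0.
Proof.
move=> AM rkA AL; apply: contraNneq => detM0; apply/eqP.
have rkM : (\rank M <= \rank A)%N.
  have : \rank M != m by rewrite -/(row_free M) row_free_unit unitmxE detM0 unitr0.
  by have := rank_leq_row M; rewrite rkA; lia.
have /submxP[y ->] : (row i M <= A)%MS.
  apply: submx_trans (row_sub i M) _.
  by rewrite -(mxrank_leqif_sup AM) eqn_leq rkM mxrankS.
by rewrite -mulmxA AL mulmx0 mxE.
Qed.

Section FacetSigns.
Variables (R : realType) (n d : nat) (p : 'I_n.+1 -> 'rV[R]_d).

Definition hom_pt (k : nat) : 'rV[R]_(d + 1) := row_mx (p (inord k)) (const_mx 1).

Lemma hom_pt_mul_col_mx (a : 'rV[R]_d) b k :
  (hom_pt k *m col_mx a^T (const_mx (- b) : 'cV[R]_1)) 0 0 = dotp (p (inord k)) a - b.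
Proof.
rewrite mul_row_col !mxE big_ord1 !mxE mul1r; congr (_ + _).
by apply: eq_bigr => j _; rewrite !mxE.
Qed.

Variables (F : seq nat) (a : 'rV[R]_d) (b : R).
Hypotheses (sizeF : size F = d) (F_lt : all (fun k => k < n.+1)%N F).
Let T := [set i : 'I_n.+1 | nat_of_ord i \in F].
Hypotheses (onT : forall i, i \in T -> dotp (p i) a = b)
           (offT : forall i, i \notin T -> dotp (p i) a < b).
Let L := col_mx a^T (const_mx (- b) : 'cV[R]_1).

Lemma facet_functional_eq0 : {in F, forall k, (hom_pt k *m L) 0 0 = 0}.
Proof.
move=> k kF; rewrite hom_pt_mul_col_mx onT ?subrr // /T inE inordK //.
exact: (allP F_lt).
Qed.

Lemma facet_functional_lt0 k : (k < n.+1)%N -> k \notin F -> (hom_pt k *m L) 0 0 < 0.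
Proof. by move=> kn kF; rewrite hom_pt_mul_col_mx subr_lt0 offT // /T inE inordK. Qed.

Lemma facet_bracket_neq0 v : \rank (hom_mx p T) = d ->
  (v < n.+1)%N -> v \notin F -> bracket hom_pt (F ++ [:: v]) != 0.
Proof.
move=> rkT vn vF; pose MF := seqmx hom_pt d F.
have homF : (hom_mx p T <= MF)%MS.
  apply/row_subP => i; case: (boolP (i \in T)) => iT; last first.
    by rewrite (_ : row i _ = 0) ?sub0mx //; apply/rowP => j; rewrite !mxE (negbTE iT).
  have iF : (val i \in F) by rewrite inE in iT.
  have ltF : (index (val i) F < d)%N by rewrite -sizeF index_mem.
  rewrite (_ : row i _ = row (Ordinal ltF) MF) ?row_sub //.
  by apply/rowP => j; rewrite !mxE iT nth_index // inord_val.
have rkF : \rank MF = d.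
  by apply/eqP; rewrite eqn_leq rank_leq_row -{1}rkT mxrankS.
have szFv : size (F ++ [:: v]) = (d + 1)%N by rewrite size_cat sizeF.
rewrite /bracket szFv eqxx.
have lt_d : (d < d + 1)%N by rewrite addn1.
apply: (@det_neq0_kernel_row _ _ _ MF _ L (Ordinal lt_d)).
- apply/row_subP => i; have lt_i : (i < d + 1)%N by rewrite addn1 ltnS ltnW.
  rewrite rowK (_ : hom_pt _ = row (Ordinal lt_i) (seqmx hom_pt (d + 1) (F ++ [:: v]))).
    exact: row_sub.
  by rewrite rowK /= nth_cat sizeF ltn_ord.
- by rewrite rkF addn1.
- apply/colP => i; rewrite [RHS]mxE (_ : (MF *m L) i 0 = (row i MF *m L) 0 0).
    by rewrite rowK (facet_functional_eq0 (mem_nth 0 _)) // sizeF.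
  by rewrite -row_mul [RHS]mxE.
by rewrite rowK /= nth_cat sizeF ltnn subnn lt_eqF // facet_functional_lt0.
Qed.

Lemma facet_bracket_sign v w : \rank (hom_mx p T) = d ->
  (v < n.+1)%N -> (w < n.+1)%N -> v \notin F -> w \notin F ->
  0 < bracket hom_pt (F ++ [:: v]) * bracket hom_pt (F ++ [:: w]).
Proof.
move=> rkT vn wn vF wF.
have sz : (size F + size [:: v; w])%N = (d + 1).+1 by rewrite sizeF addn1 addn2.
have := @bracket_cramer _ _ hom_pt F [:: v; w] L sz facet_functional_eq0.
rewrite !big_ord_recl big_ord0 /=.
have := facet_functional_lt0 vn vF; have := facet_functional_lt0 wn wF.
have := facet_bracket_neq0 rkT vn vF.
set X := bracket _ (_ ++ [:: v]); set Y := bracket _ (_ ++ [:: w]).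
rewrite expr0 mul1r addr0 /= expr1 mulN1r => nzX lw lv cramer.
have X2 : 0 < X * X by rewrite -expr2 exprn_even_gt0.
have : X * Y * (hom_pt v *m L) 0 0 = X * X * (hom_pt w *m L) 0 0.
  by rewrite -!mulrA; congr (_ * _); lra.
nra.
Qed.

End FacetSigns.

Lemma is_facet_bracket_sign (R : realType) n d (p : 'I_n.+1 -> 'rV[R]_d) F v w :
  is_facet p [set i : 'I_n.+1 | nat_of_ord i \in F] ->
  size F = d -> all (fun k => k < n.+1)%N F ->
  (v < n.+1)%N -> (w < n.+1)%N -> v \notin F -> w \notin F ->
  0 < bracket (hom_pt p) (F ++ [:: v]) * bracket (hom_pt p) (F ++ [:: w]).
Proof.
move=> [[a [b [_ onT offT]]] rkT] sizeF F_lt.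
exact: (@facet_bracket_sign R n d p F a b sizeF F_lt onT offT v w rkT).
Qed.

Fixpoint insert_sign (a : nat) (s : seq nat) : bool * seq nat :=
  if s is b :: s' then
    if (a <= b)%N then (false, a :: s)
    else let: (e, t) := insert_sign a s' in (~~ e, b :: t)
  else (false, [:: a]).

Fixpoint sort_sign (s : seq nat) : bool * seq nat :=
  if s is a :: s' then
    let: (e, t) := sort_sign s' in
    let: (e', t') := insert_sign a t in (e (+) e', t')
  else (false, [::]).

Definition lookup_sign (kb : seq (seq nat * bool)) (s : seq nat) : option bool :=
  let: (e, t) := sort_sign s in omap (addb e) (ohead [seq f.2 | f <- kb & f.1 == t]).

Inductive step :=
  | FacetStep of seq nat & nat & nat
  | PluckerStep of seq nat & nat & nat & nat & nat.

Definition step_claim (facets : seq (seq nat)) (n : nat) kb st : option (seq nat * bool) :=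
  match st with
  | FacetStep F v w =>
      if [&& F \in facets, v \notin F, w \notin F, (v < n)%N & (w < n)%N]
      then omap (pair (F ++ [:: w])) (lookup_sign kb (F ++ [:: v]))
      else None
  | PluckerStep u a b c d =>
      (* [u a b][u c d] = [u a c][u b d] - [u a d][u b c], used when the two terms
         on the right are known to have the same sign *)
      let sign x y := lookup_sign kb (u ++ [:: x; y]) in
      if (sign c d, sign a c, sign b d, sign a d, sign b c)
        is (Some ecd, Some eac, Some ebd, Some ead, Some ebc)
      then if ~~ (eac (+) ebd) == ead (+) ebc
           then Some (u ++ [:: a; b], ~~ (ead (+) ebc) (+) ecd) else None
      else None
  end.

Fixpoint refutes facets n kb (cert : seq step) : bool :=
  if cert is st :: cert' then
    if step_claim facets n kb st is Some (t, b) then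
      (lookup_sign kb t == Some (~~ b)) ||
      let: (e, t') := sort_sign t in refutes facets n ((t', e (+) b) :: kb) cert'
    else false
  else false.

Definition refutation facets n (seed : seq nat) (cert : seq step) : bool :=
  let: (e, t) := sort_sign seed in refutes facets n [:: (t, e)] cert.

Lemma sgrD_same (R : realDomainType) (x y : R) (e : bool) :
  Num.sg x = (-1) ^+ e -> Num.sg y = (-1) ^+ e -> Num.sg (x + y) = (-1) ^+ e :> R.
Proof.
case: e; rewrite ?expr0 ?expr1 => sx sy.
  have x0 : x < 0 by rewrite -sgr_lt0 sx ltrN10.
  have y0 : y < 0 by rewrite -sgr_lt0 sy ltrN10.
  by rewrite ltr0_sg //; lra.
have x0 : 0 < x by rewrite -sgr_gt0 sx ltr01.
have y0 : 0 < y by rewrite -sgr_gt0 sy ltr01.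
by rewrite gtr0_sg // addr_gt0.
Qed.

Section Refutation.
Variables (R : realDomainType) (chi : seq nat -> R) (facets : seq (seq nat)) (n : nat).
Hypothesis chi_swap : forall pre a b s, chi (pre ++ a :: b :: s) = - chi (pre ++ b :: a :: s).
Hypothesis chi_plucker : forall u a b c d,
  chi (u ++ [:: a; b]) * chi (u ++ [:: c; d]) - chi (u ++ [:: a; c]) * chi (u ++ [:: b; d])
  + chi (u ++ [:: a; d]) * chi (u ++ [:: b; c]) = 0.
Hypothesis chi_facet : forall F v w, F \in facets -> v \notin F -> w \notin F ->
  (v < n)%N -> (w < n)%N -> 0 < chi (F ++ [:: v]) * chi (F ++ [:: w]).

Lemma chi_insert_sign pre a s :
  chi (pre ++ a :: s) = (-1) ^+ (insert_sign a s).1 * chi (pre ++ (insert_sign a s).2).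
Proof.
elim: s pre => [|b s IHs] pre /=; first by rewrite mul1r.
case: leqP => _; first by rewrite mul1r.
case: (insert_sign a s) (IHs (rcons pre b)) => e t; rewrite -!cats1 -!catA /= => IH.
by rewrite chi_swap IH signrN mulNr.
Qed.

Lemma chi_sort_sign pre s :
  chi (pre ++ s) = (-1) ^+ (sort_sign s).1 * chi (pre ++ (sort_sign s).2).
Proof.
elim: s pre => [|a s IHs] pre /=; first by rewrite mul1r.
case: (sort_sign s) (IHs (rcons pre a)) => e t; rewrite -cats1 -catA /= => ->.
rewrite cats1 cat_rcons chi_insert_sign.
by case: (insert_sign a t) => e' t' /=; rewrite signr_addb mulrA.
Qed.

Section Sound.
Variable sigma : R.
Hypothesis sigma_sq : sigma * sigma = 1.

(* A fact (t, b) records the sign of [chi t] relative to the unknown sign [sigma]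
   of the seed bracket: the rules never need the absolute signs, as the
   Pluecker rule only compares products of two brackets. *)
Definition kb_valid (kb : seq (seq nat * bool)) :=
  forall t b, (t, b) \in kb -> Num.sg (chi t) = (-1) ^+ b * sigma.

Lemma sg_factor x y (b c : bool) :
  Num.sg x = (-1) ^+ b * sigma -> Num.sg (x * y) = (-1) ^+ c ->
  Num.sg y = (-1) ^+ (b (+) c) * sigma.
Proof.
move=> sx sxy; transitivity (Num.sg x * Num.sg x * Num.sg y).
  by rewrite sx mulrACA -expr2 sqrr_sign mul1r sigma_sq mul1r.
by rewrite -mulrA -sgrM sxy sx signr_addb; ring.
Qed.

Lemma lookup_sign_sound kb s b :
  kb_valid kb -> lookup_sign kb s = Some b -> Num.sg (chi s) = (-1) ^+ b * sigma.
Proof.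
move=> kbv; rewrite /lookup_sign (chi_sort_sign [::] s) /=.
case: (sort_sign s) => e t.
case E: (ohead _) => [b'|] //= [<-].
have : b' \in [seq f.2 | f <- kb & f.1 == t].
  by move: E; case: [seq _ | _ <- _ & _] => //= ? ? [->]; exact: mem_head.
case/mapP => -[t' b''] /=; rewrite mem_filter /= => /andP[/eqP -> tb ->].
by rewrite sgrM sgrX sgrN1 (kbv _ _ tb) signr_addb mulrA.
Qed.

Lemma step_claim_sound kb st t b : kb_valid kb ->
  step_claim facets n kb st = Some (t, b) -> Num.sg (chi t) = (-1) ^+ b * sigma.
Proof.
move=> kbv; case: st => [F v w | u a b' c d] /=.
  case: ifP => // /and5P[Ff vF wF vn wn].
  case E: (lookup_sign _ _) => [e|] //= [<- <-].
  rewrite -[e]addbF; apply: sg_factor (lookup_sign_sound kbv E) _.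
  by rewrite gtr0_sg // chi_facet.
case Ecd: (lookup_sign _ (u ++ [:: c; d])) => [ecd|] //.
case Eac: (lookup_sign _ (u ++ [:: a; c])) => [eac|] //.
case Ebd: (lookup_sign _ (u ++ [:: b'; d])) => [ebd|] //.
case Ead: (lookup_sign _ (u ++ [:: a; d])) => [ead|] //.
case Ebc: (lookup_sign _ (u ++ [:: b'; c])) => [ebc|] //.
case: eqP => // same [<- <-].
have sg_prod x1 x2 (ex ey : bool) :
    lookup_sign kb x1 = Some ex -> lookup_sign kb x2 = Some ey ->
    Num.sg (chi x1 * chi x2) = (-1) ^+ (ex (+) ey).
  move=> /(lookup_sign_sound kbv) s1 /(lookup_sign_sound kbv) s2.
  by rewrite sgrM s1 s2 signr_addb mulrACA sigma_sq mulr1.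
have s2 : Num.sg (- (chi (u ++ [:: a; c]) * chi (u ++ [:: b'; d]))) = (-1) ^+ (ead (+) ebc).
  by rewrite sgrN (sg_prod _ _ _ _ Eac Ebd) -signrN same.
have s3 := sg_prod _ _ _ _ Ead Ebc.
rewrite addbC; apply: sg_factor (lookup_sign_sound kbv Ecd) _.
have -> : chi (u ++ [:: c; d]) * chi (u ++ [:: a; b']) =
          - (- (chi (u ++ [:: a; c]) * chi (u ++ [:: b'; d]))
             + chi (u ++ [:: a; d]) * chi (u ++ [:: b'; c])).
  apply/eqP; rewrite -subr_eq0 -[X in _ == X](chi_plucker u a b' c d); apply/eqP; ring.
by rewrite sgrN (sgrD_same s2 s3) signrN.
Qed.

Lemma refutes_sound kb cert : kb_valid kb -> ~~ refutes facets n kb cert.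
Proof.
elim: cert kb => // st cert IH kb kbv /=.
case E: step_claim => [[t b]|] //; have sgt := step_claim_sound kbv E.
rewrite negb_or; apply/andP; split.
  apply/eqP => /(lookup_sign_sound kbv); rewrite sgt signrN mulNr => /eqP.
  rewrite eq_sym eqNr mulf_eq0 signr_eq0 /= => /eqP sigma0.
  by move: sigma_sq; rewrite sigma0 mulr0 => /eqP; rewrite eq_sym oner_eq0.
have := chi_sort_sign [::] t; case: (sort_sign t) => e t' /= chi_t.
apply: IH => t0 b0; rewrite in_cons => /predU1P[[-> ->] | ]; last exact: kbv.
rewrite -[chi t'](signrMK e) -chi_t sgrM sgrX sgrN1 sgt signr_addb.
by rewrite mulrA.
Qed.

End Sound.
Lemma refutation_sound seed cert : chi seed != 0 -> ~~ refutation facets n seed cert.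
Proof.
move=> nz; rewrite /refutation; have := chi_sort_sign [::] seed.
case: (sort_sign seed) => e t /= chi_seed.
have sigma_sq : Num.sg (chi seed) * Num.sg (chi seed) = 1.
  by rewrite -expr2 sqr_sg nz.
apply: (refutes_sound sigma_sq) => t0 b0; rewrite inE => /eqP[-> ->].
by rewrite -[chi t](signrMK e) -chi_seed sgrM sgrX sgrN1.
Qed.

End Refutation.

Definition Z_certificate : seq step := [::
  FacetStep [:: 2; 6; 10; 14] 7 1;
  FacetStep [:: 1; 6; 10; 14] 2 4;
  FacetStep [:: 1; 4; 10; 14] 6 0;
  FacetStep [:: 1; 4; 10; 14] 6 15;
  FacetStep [:: 1; 4; 10; 15] 14 0;
  FacetStep [:: 1; 6; 10; 14] 2 8;
  FacetStep [:: 1; 6; 8; 14] 10 0;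
  FacetStep [:: 0; 6; 8; 14] 1 12;
  FacetStep [:: 0; 6; 8; 12] 14 1;
  FacetStep [:: 1; 6; 8; 14] 10 15;
  FacetStep [:: 1; 6; 8; 15] 14 0;
  FacetStep [:: 1; 6; 10; 14] 2 0;
  FacetStep [:: 1; 6; 10; 14] 2 15;
  FacetStep [:: 1; 6; 10; 15] 14 0;
  FacetStep [:: 2; 7; 10; 14] 6 3;
  FacetStep [:: 3; 7; 10; 14] 2 12;
  FacetStep [:: 3; 7; 10; 12] 14 9;
  FacetStep [:: 3; 7; 9; 12] 10 13;
  FacetStep [:: 3; 7; 9; 13] 12 1;
  FacetStep [:: 1; 7; 9; 13] 3 0;
  FacetStep [:: 2; 7; 10; 14] 6 9;
  FacetStep [:: 2; 7; 9; 14] 10 0;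
  FacetStep [:: 0; 7; 9; 14] 2 1;
  FacetStep [:: 0; 4; 10; 14] 1 13;
  FacetStep [:: 0; 4; 10; 13] 14 9;
  FacetStep [:: 0; 4; 9; 13] 10 2;
  FacetStep [:: 0; 4; 10; 14] 1 2;
  FacetStep [:: 2; 6; 10; 14] 7 15;
  FacetStep [:: 2; 6; 10; 15] 14 4;
  FacetStep [:: 2; 4; 10; 15] 6 0;
  FacetStep [:: 3; 7; 10; 14] 2 5;
  FacetStep [:: 3; 5; 10; 14] 7 0;
  FacetStep [:: 0; 5; 10; 14] 3 2;
  FacetStep [:: 2; 6; 10; 14] 7 9;
  FacetStep [:: 2; 6; 9; 14] 10 12;
  FacetStep [:: 2; 6; 9; 12] 14 8;
  FacetStep [:: 2; 6; 8; 12] 9 0;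
  FacetStep [:: 2; 6; 8; 12] 9 13;
  FacetStep [:: 2; 6; 8; 13] 12 0;
  FacetStep [:: 0; 6; 8; 14] 1 2;
  FacetStep [:: 2; 6; 9; 14] 10 0;
  FacetStep [:: 2; 6; 10; 15] 14 0;
  FacetStep [:: 2; 7; 9; 14] 10 12;
  FacetStep [:: 2; 7; 9; 12] 14 0;
  FacetStep [:: 0; 7; 9; 14] 2 15;
  FacetStep [:: 0; 7; 9; 15] 14 2;
  FacetStep [:: 2; 7; 10; 14] 6 0;
  FacetStep [:: 0; 6; 8; 12] 14 3;
  FacetStep [:: 1; 6; 8; 15] 14 3;
  FacetStep [:: 3; 6; 8; 15] 1 13;
  FacetStep [:: 3; 6; 8; 13] 15 0;
  FacetStep [:: 3; 6; 8; 15] 1 0;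
  FacetStep [:: 3; 7; 9; 12] 10 0;
  FacetStep [:: 3; 7; 9; 13] 12 0;
  FacetStep [:: 0; 7; 9; 14] 2 3;
  FacetStep [:: 0; 4; 10; 14] 1 6;
  FacetStep [:: 0; 4; 9; 13] 10 7;
  FacetStep [:: 0; 4; 10; 14] 1 7;
  FacetStep [:: 0; 4; 9; 13] 10 15;
  FacetStep [:: 0; 4; 10; 14] 1 11;
  FacetStep [:: 0; 4; 10; 14] 1 15;
  FacetStep [:: 0; 6; 8; 14] 1 5;
  FacetStep [:: 0; 6; 9; 14] 2 5;
  FacetStep [:: 0; 5; 10; 14] 3 6;
  FacetStep [:: 0; 5; 10; 14] 3 13;
  FacetStep [:: 0; 5; 10; 13] 14 9;
  FacetStep [:: 0; 5; 9; 13] 10 7;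
  FacetStep [:: 0; 7; 9; 14] 2 5;
  FacetStep [:: 0; 5; 10; 14] 3 9;
  FacetStep [:: 0; 7; 9; 15] 14 5;
  FacetStep [:: 0; 5; 9; 15] 7 10;
  FacetStep [:: 0; 5; 9; 13] 10 14;
  FacetStep [:: 0; 5; 9; 15] 7 14;
  FacetStep [:: 0; 5; 10; 14] 3 15;
  FacetStep [:: 0; 6; 8; 14] 1 10;
  FacetStep [:: 0; 6; 8; 12] 14 13;
  FacetStep [:: 0; 6; 8; 12] 14 15;
  FacetStep [:: 0; 6; 8; 14] 1 15;
  FacetStep [:: 0; 6; 9; 14] 2 15;
  FacetStep [:: 0; 7; 9; 14] 2 10;
  FacetStep [:: 0; 7; 9; 15] 14 10;
  FacetStep [:: 0; 7; 9; 14] 2 12;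
  FacetStep [:: 0; 7; 9; 14] 2 13;
  FacetStep [:: 0; 7; 9; 15] 14 13;
  FacetStep [:: 3; 7; 10; 14] 2 11;
  FacetStep [:: 3; 7; 11; 14] 10 0;
  FacetStep [:: 0; 7; 11; 14] 3 10;
  FacetStep [:: 2; 6; 8; 12] 9 1;
  FacetStep [:: 1; 6; 8; 14] 10 2;
  FacetStep [:: 1; 6; 8; 15] 14 2;
  FacetStep [:: 2; 6; 9; 12] 14 1;
  FacetStep [:: 2; 6; 10; 15] 14 1;
  FacetStep [:: 2; 6; 10; 15] 14 11;
  FacetStep [:: 2; 6; 11; 15] 10 1;
  FacetStep [:: 1; 7; 9; 13] 3 2;
  FacetStep [:: 2; 7; 9; 14] 10 1;
  FacetStep [:: 0; 7; 9; 15] 14 1;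
  FacetStep [:: 1; 7; 9; 15] 0 2;
  FacetStep [:: 1; 6; 8; 15] 14 5;
  FacetStep [:: 1; 7; 9; 15] 0 5;
  FacetStep [:: 1; 5; 9; 15] 7 6;
  FacetStep [:: 1; 6; 10; 15] 14 5;
  FacetStep [:: 1; 4; 10; 15] 14 11;
  FacetStep [:: 1; 4; 11; 15] 10 5;
  FacetStep [:: 1; 5; 11; 15] 4 6;
  FacetStep [:: 1; 6; 8; 15] 14 11;
  FacetStep [:: 1; 6; 8; 14] 10 12;
  FacetStep [:: 1; 6; 10; 15] 14 9;
  FacetStep [:: 1; 7; 9; 13] 3 14;
  FacetStep [:: 2; 7; 10; 14] 6 12;
  FacetStep [:: 2; 7; 10; 12] 14 5;
  FacetStep [:: 2; 5; 10; 12] 7 3;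
  FacetStep [:: 3; 5; 10; 14] 7 2;
  FacetStep [:: 2; 6; 8; 12] 9 3;
  FacetStep [:: 3; 6; 8; 15] 1 2;
  FacetStep [:: 2; 6; 10; 14] 7 3;
  FacetStep [:: 2; 5; 10; 12] 7 4;
  FacetStep [:: 2; 4; 10; 15] 6 13;
  FacetStep [:: 2; 4; 10; 13] 15 5;
  FacetStep [:: 2; 4; 10; 15] 6 5;
  FacetStep [:: 2; 4; 10; 13] 15 6;
  FacetStep [:: 2; 6; 10; 14] 7 4;
  FacetStep [:: 2; 7; 10; 12] 14 4;
  FacetStep [:: 2; 4; 10; 13] 15 7;
  FacetStep [:: 2; 7; 10; 14] 6 4;
  FacetStep [:: 2; 4; 10; 13] 15 12;
  FacetStep [:: 2; 4; 10; 13] 15 14;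
  FacetStep [:: 2; 5; 10; 12] 7 6;
  FacetStep [:: 2; 5; 10; 12] 7 13;
  FacetStep [:: 2; 5; 10; 13] 12 6;
  FacetStep [:: 2; 6; 10; 14] 7 5;
  FacetStep [:: 2; 6; 10; 15] 14 5;
  FacetStep [:: 2; 7; 10; 14] 6 5;
  FacetStep [:: 2; 5; 10; 12] 7 11;
  FacetStep [:: 2; 5; 10; 13] 12 11;
  FacetStep [:: 2; 5; 10; 12] 7 14;
  FacetStep [:: 2; 5; 10; 12] 7 15;
  FacetStep [:: 2; 7; 10; 12] 14 6;
  FacetStep [:: 2; 6; 8; 13] 12 9;
  FacetStep [:: 2; 6; 9; 14] 10 8;
  FacetStep [:: 2; 6; 8; 12] 9 10;
  FacetStep [:: 2; 6; 8; 13] 12 10;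
  FacetStep [:: 2; 6; 10; 14] 7 8;
  FacetStep [:: 2; 6; 10; 15] 14 8;
  FacetStep [:: 2; 6; 8; 12] 9 11;
  FacetStep [:: 2; 6; 11; 15] 10 8;
  FacetStep [:: 2; 6; 8; 12] 9 14;
  FacetStep [:: 2; 6; 8; 12] 9 15;
  FacetStep [:: 2; 6; 8; 13] 12 14;
  FacetStep [:: 2; 6; 8; 13] 12 15;
  FacetStep [:: 2; 6; 9; 12] 14 10;
  FacetStep [:: 2; 6; 10; 15] 14 9;
  FacetStep [:: 2; 6; 9; 12] 14 11;
  FacetStep [:: 2; 6; 11; 15] 10 13;
  FacetStep [:: 2; 6; 11; 13] 15 9;
  FacetStep [:: 2; 6; 11; 15] 10 9;
  FacetStep [:: 2; 6; 9; 12] 14 13;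
  FacetStep [:: 2; 6; 9; 14] 10 13;
  FacetStep [:: 2; 6; 9; 14] 10 15;
  FacetStep [:: 2; 6; 11; 13] 15 10;
  FacetStep [:: 2; 6; 10; 14] 7 11;
  FacetStep [:: 2; 6; 10; 14] 7 12;
  FacetStep [:: 2; 6; 10; 14] 7 13;
  FacetStep [:: 2; 6; 10; 15] 14 13;
  FacetStep [:: 2; 7; 9; 14] 10 15;
  FacetStep [:: 2; 7; 10; 12] 14 11;
  FacetStep [:: 2; 7; 10; 14] 6 11;
  PluckerStep [:: 1; 6; 8] 0 2 12 14;
  PluckerStep [:: 1; 7; 9] 0 2 13 14;
  PluckerStep [:: 0; 6; 14] 1 5 8 10;
  PluckerStep [:: 0; 5; 14] 6 15 9 10;
  PluckerStep [:: 0; 6; 14] 1 15 5 8;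
  PluckerStep [:: 0; 6; 14] 10 15 1 5;
  PluckerStep [:: 0; 10; 14] 1 15 4 6;
  PluckerStep [:: 0; 6; 8] 2 3 12 13;
  PluckerStep [:: 0; 7; 9] 2 3 12 14;
  PluckerStep [:: 0; 6; 8] 2 15 3 12;
  PluckerStep [:: 2; 6; 8] 0 11 12 15;
  PluckerStep [:: 2; 6; 14] 0 13 8 9;
  PluckerStep [:: 0; 6; 15] 8 10 1 14;
  PluckerStep [:: 0; 6; 15] 2 14 8 10;
  PluckerStep [:: 0; 7; 9] 2 13 3 14;
  PluckerStep [:: 0; 9; 13] 2 15 4 7;
  PluckerStep [:: 0; 5; 9] 7 10 13 14;
  PluckerStep [:: 0; 9; 10] 14 15 5 7;
  PluckerStep [:: 0; 10; 15] 4 6 1 14;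
  PluckerStep [:: 0; 10; 15] 2 14 4 6;
  PluckerStep [:: 0; 14; 15] 2 9 6 10;
  PluckerStep [:: 0; 10; 14] 2 11 4 7;
  PluckerStep [:: 2; 5; 10] 3 6 12 14;
  PluckerStep [:: 2; 6; 8] 3 10 12 15;
  PluckerStep [:: 2; 6; 10] 5 8 3 14;
  PluckerStep [:: 2; 6; 8] 10 11 12 15;
  PluckerStep [:: 2; 6; 10] 5 11 8 13;
  PluckerStep [:: 2; 6; 8] 9 10 12 14;
  PluckerStep [:: 2; 6; 8] 1 9 12 14;
  PluckerStep [:: 2; 6; 8] 9 15 1 12;
  PluckerStep [:: 1; 6; 15] 2 5 8 11;
  PluckerStep [:: 1; 6; 15] 2 9 5 10;
  PluckerStep [:: 2; 6; 8] 14 15 0 1;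
  PluckerStep [:: 2; 6; 8] 11 14 0 15;
  PluckerStep [:: 2; 6; 8] 9 11 12 14;
  PluckerStep [:: 2; 6; 9] 1 11 8 15;
  PluckerStep [:: 2; 6; 9] 1 13 11 12;
  PluckerStep [:: 2; 6; 9] 13 15 1 11;
  PluckerStep [:: 2; 6; 9] 10 13 8 15;
  PluckerStep [:: 2; 6; 10] 3 13 5 14;
  PluckerStep [:: 2; 6; 10] 3 9 8 13;
  PluckerStep [:: 2; 6; 10] 3 11 8 13;
  PluckerStep [:: 2; 6; 10] 3 12 8 14;
  PluckerStep [:: 2; 6; 9] 10 11 8 15;
  PluckerStep [:: 2; 6; 10] 11 12 3 9;
  PluckerStep [:: 2; 4; 10] 6 7 13 14;
  PluckerStep [:: 2; 5; 10] 4 6 12 15;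
  PluckerStep [:: 2; 6; 10] 3 4 5 14;
  PluckerStep [:: 2; 6; 10] 4 8 3 14;
  PluckerStep [:: 2; 5; 10] 6 7 12 14;
  PluckerStep [:: 2; 6; 10] 4 12 5 7;
  PluckerStep [:: 2; 6; 10] 7 8 4 12;
  PluckerStep [:: 2; 6; 10] 7 11 8 14;
  PluckerStep [:: 2; 10; 11] 5 7 6 12;
  PluckerStep [:: 2; 10; 11] 5 14 6 7;
  PluckerStep [:: 2; 10; 11] 13 14 5 6;
  PluckerStep [:: 2; 4; 10] 5 7 12 13;
  PluckerStep [:: 2; 4; 10] 5 14 7 13;
  PluckerStep [:: 2; 10; 14] 4 11 0 5;
  PluckerStep [:: 2; 10; 14] 0 13 4 11;
  PluckerStep [:: 2; 10; 13] 14 15 4 6;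
  PluckerStep [:: 2; 6; 13] 14 15 8 10;
  PluckerStep [:: 2; 13; 14] 0 15 6 10;
  PluckerStep [:: 2; 7; 9] 13 15 0 1;
  PluckerStep [:: 2; 9; 15] 13 14 0 7;
  PluckerStep [:: 2; 14; 15] 0 6 9 13].

Theorem mainTheorem2 (R : realType) : ~ polytopal R 4 Z_facet.
Proof.
move=> [p [_ facet_p]].
have Z_facet_sign F v w : F \in Z_facets -> v \notin F -> w \notin F ->
    (v < 16)%N -> (w < 16)%N ->
    0 < bracket (hom_pt p) (F ++ [:: v]) * bracket (hom_pt p) (F ++ [:: w]).
  move=> FZ vF wF vn wn.
  have /allP/(_ F FZ)/andP[/eqP sizeF F_lt] :
    all (fun F => (size F == 4) && all (fun k => k < 16)%N F) Z_facets by [].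
  by apply: is_facet_bracket_sign => //; apply/facet_p; exists F.
have seed_neq0 : bracket (hom_pt p) [:: 2; 6; 10; 14; 7] != 0.
  have := Z_facet_sign [:: 2; 6; 10; 14] 7 7 isT isT isT isT isT.
  by apply: contraTneq => ->; rewrite mul0r ltxx.
have := refutation_sound (@bracket_swap _ _ _) (@bracket_grassmann_plucker _ _ _)
  Z_facet_sign Z_certificate seed_neq0.
by vm_compute.
Qed.
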